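(* Fix an angle $0<\theta\le\pi/8$ and, for an angle $\alpha$, let $\phi_\alpha=\cos(\alpha)|0\rangle+\sin(\alpha)|1\rangle$. Define $\phi_{0,0}=\phi_{-\theta}$, $\phi_{0,1}=\phi_{\theta}$, $\phi_{1,0}=\phi_{\pi/2-\theta}$, $\phi_{1,1}=\phi_{\pi/2+\theta}$. Consider the bit escrow protocol with the return challenge: an honest Alice picks her bit $b$ and a uniformly random $x\in\{0,1\}$ and sends the qubit $\phi_{b,x}$ to Bob; later Bob is asked to return the deposited qubit, returns some qubit $q$, and Alice measures $q$ in the basis $\{\phi_{0,x},\phi_{1,x}\}$, setting $r_A=err$ (rejecting) unless the outcome is $\phi_{b,x}$. Then this protocol is $\left(\epsilon=O\!\left(\frac{\sqrt{p}}{\sin(2\theta)}\right),\,p\right)$ sealing, i.e., there is an absolute constant $C$ such that for every $p\in[0,1]$ the protocol is $\left(C\sqrt{p}/\sin(2\theta),\,p\right)$ sealing.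
   Context: A bit escrow protocol is $(\epsilon,p)$ sealing if, whenever Alice is honest and deposits a bit $b$ with $\Pr(b=0)=1/2$, for any (arbitrary quantum) strategy Bob uses and any value $c$ Bob learns (computed from the system Bob retains), either $\Pr(c=b)\le\frac12+\epsilon$ or $\Pr(r_A=err)\ge p$, where the probabilities are over $b$ uniform in $\{0,1\}$ and the protocol. Bob's general strategy: he may apply any unitary to the received qubit together with an ancilla, then returns a qubit to Alice and keeps the rest. *)

From HB Require Import structures.
From mathcomp Require Import all_boot all_order all_algebra.
From mathcomp Require Import complex mxtens.
From mathcomp Require Import reals trigo.
Set Implicit Arguments. Unset Strict Implicit. Unset Printing Implicit Defensive.
Import Order.TTheory GRing.Theory Num.Theory.
Local Open Scope ring_scope.
Local Open Scope complex_scope.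

Section Escrow.
Variable R : realType.
Local Notation C := R[i].

Definition adjmx m n (A : 'M[C]_(m, n)) : 'M[C]_(n, m) := (map_mx conjc A)^T.

Definition expect n k (M : 'M[C]_n) (v : 'M[C]_(n, k)) : C := \tr (adjmx v *m M *m v).

Definition unitary n (U : 'M[C]_n) := adjmx U *m U = 1%:M.

Definition psd n (M : 'M[C]_n) := forall v : 'cV[C]_n, 0 <= expect M v.

(* a two-outcome POVM (Bob's guess c in {0,1} = bool) on his retained system *)
Definition povm n (E : bool -> 'M[C]_n) :=
  psd (E false) /\ psd (E true) /\ E false + E true = 1%:M.

Definition phi (a : R) : 'cV[C]_2 :=
  \col_(k < 2) (if k == 0 :> nat then (cos a)%:C else (sin a)%:C).

(* phi_{b,x}; bits encoded as bool (false = 0, true = 1) *)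
Definition phibx (th : R) (b x : bool) : 'cV[C]_2 :=
  match b, x with
  | false, false => phi (- th)
  | false, true  => phi th
  | true,  false => phi (pi / 2 - th)
  | true,  true  => phi (pi / 2 + th)
  end.

(* Bob's general strategy: ancilla of dimension d in initial pure state psi0,
   unitary U on (received qubit) (x) (ancilla); the first tensor factor (the qubit)
   is returned to Alice, the ancilla C^d is kept; Bob's guess c is the outcome
   of a POVM E on the retained system. *)
Definition joint_state th d (psi0 : 'cV[C]_d) (U : 'M[C]_(2 * d)) (b x : bool) :=
  U *m (phibx th b x *t psi0).

(* Pr(c = b), b and x uniform *)
Definition prob_guess th d psi0 U (E : bool -> 'M[C]_d) : R :=
  complex.Re (\sum_(b : bool) \sum_(x : bool)
    (1 / 4) * expect (1%:M *t E b) (@joint_state th d psi0 U b x)).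

(* Pr(r_A = err): Alice measures the returned qubit in {phi_{0,x}, phi_{1,x}}
   and rejects unless the outcome is phi_{b,x} *)
Definition prob_err th d psi0 U : R :=
  1 - complex.Re (\sum_(b : bool) \sum_(x : bool)
    (1 / 4) * expect ((phibx th b x *m adjmx (phibx th b x)) *t (1%:M : 'M[C]_d))
                     (@joint_state th d psi0 U b x)).

Definition sealing (th eps p : R) :=
  forall (d : nat) (psi0 : 'cV[C]_d) (U : 'M[C]_(2 * d)) (E : bool -> 'M[C]_d),
    expect 1%:M psi0 = 1 -> unitary U -> povm E ->
    prob_guess th psi0 U E <= 1 / 2 + eps \/ p <= prob_err th psi0 U.

End Escrow.

(* Write Bob's output on |k> (x) psi0 as sum_j |j> (x) a_jk.  Alice's qubit for (b, x) is
   cos alpha |0> + sin alpha |1>, so both what Bob keeps and Alice's rejection amplitude are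
   linear in the four vectors a_jk.  Averaging over x, Bob's advantage is cos(2 theta)/2
   times <a00|E|a00> + <a10|E|a10> - <a01|E|a01> - <a11|E|a11>.  The rejection amplitudes
   of the two states with b = 0 differ by sin(2 theta) (a00 - a11), and a combination of
   all four is a multiple of cos(2 theta) a10, so an error probability below p forces
   |a00 - a11|^2 = O(p / sin^2(2 theta)) and |a10|^2 = O(p).  The inequality
   t (Q(x + y) - Q(x)) <= t^2 Q(x) + (1 + t) Q(y) for Q = <.|E|.>, with t of order
   sqrt p / sin(2 theta), then bounds the advantage by O(sqrt p / sin(2 theta)). *)

From HB Require Import structures.
From mathcomp Require Import all_boot all_order all_algebra.
From mathcomp Require Import complex mxtens.
From mathcomp Require Import reals trigo.
From mathcomp Require Import ring lra.
Import Order.TTheory GRing.Theory Num.Theory.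
Set Implicit Arguments. Unset Strict Implicit. Unset Printing Implicit Defensive.
Local Open Scope ring_scope.

Lemma big_ord2 (V : nmodType) (F : 'I_2 -> V) : \sum_(j < 2) F j = F 0 + F 1.
Proof. by rewrite big_ord_recl big_ord1; congr (_ + F _); exact: val_inj. Qed.

Lemma sum_bool (V : nmodType) (F : bool -> V) : \sum_b F b = F false + F true.
Proof. by rewrite big_bool addrC. Qed.

Lemma big_bool2 (V : nmodType) (F : bool -> bool -> V) :
  \sum_b \sum_x F b x = F false false + F false true + (F true false + F true true).
Proof. by rewrite !sum_bool. Qed.

Lemma offdiag_arith (R : realFieldType) (c s g A B r1 r2 r3 r4 : R) :
  c ^+ 2 + s ^+ 2 = 1 -> 0 <= r1 -> 0 <= r2 -> 0 <= r3 -> 0 <= r4 ->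
  A <= 2 * r1 + 2 * r2 -> B <= 2 * r3 + 2 * r4 ->
  (2 * (c ^+ 4 - s ^+ 4)) ^+ 2 * g <= 2 * ((c ^+ 2) ^+ 2 * A) + 2 * ((s ^+ 2) ^+ 2 * B) ->
  (c ^+ 2 - s ^+ 2) ^+ 2 * g <= r1 + r2 + (r3 + r4).
Proof.
move=> cs1 r1_ge0 r2_ge0 r3_ge0 r4_ge0 leA leB.
have -> : c ^+ 4 - s ^+ 4 = c ^+ 2 - s ^+ 2 by rewrite -[RHS]mulr1 -cs1; ring.
have [c2_ge0 s2_ge0] : 0 <= c ^+ 2 /\ 0 <= s ^+ 2 by rewrite !sqr_ge0.
move: (c ^+ 2) (s ^+ 2) cs1 c2_ge0 s2_ge0 => C S CS1 C0 S0 h.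
have hA : C ^+ 2 * A <= 2 * r1 + 2 * r2.
  apply: le_trans (ler_wpM2l (sqr_ge0 C) leA) _.
  rewrite ler_piMl ?addr_ge0 ?mulr_ge0 //; nra.
have hB : S ^+ 2 * B <= 2 * r3 + 2 * r4.
  apply: le_trans (ler_wpM2l (sqr_ge0 S) leB) _.
  rewrite ler_piMl ?addr_ge0 ?mulr_ge0 //; nra.
nra.
Qed.

(* With q := sqrt p / s2 the hypotheses give D, g <= 8 q^2; if q <= 1, then t := q gives
   B <= 25 q, and otherwise B <= 1 suffices. *)
Lemma sealing_arith (R : rcfType) (c2 s2 p err D g B : R) :
  0 < s2 -> s2 <= 1 -> 0 <= c2 -> c2 <= 1 -> 1 / 2 <= c2 ^+ 2 -> 0 <= err -> err < p ->
  s2 ^+ 2 * D <= 8 * err -> c2 ^+ 2 * g <= 4 * err -> B <= 1 ->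
  (forall t, 0 < t -> t * B <= t ^+ 2 + (1 + t) * D + t * g) ->
  c2 / 2 * B <= 13 * Num.sqrt p / s2.
Proof.
move=> s2_gt0 s2_le1 c2_ge0 c2_le1 c2_sqr err_ge0 err_lt_p hD hg B_le1 hB.
have r_gt0 : 0 < Num.sqrt p by rewrite sqrtr_gt0; lra.
have r_sqr : Num.sqrt p ^+ 2 = p by rewrite sqr_sqrtr //; lra.
rewrite -[13 * _ / s2]mulrA; move: (Num.sqrt p / s2) (divfK (lt0r_neq0 s2_gt0) (Num.sqrt p)) => q qs2.
have q_gt0 : 0 < q by rewrite -(pmulr_lgt0 _ s2_gt0) qs2.
move: r_sqr; rewrite -qs2 exprMn => p_q2.
have D_le : D <= 8 * q ^+ 2.
  rewrite -(ler_pM2l (exprn_gt0 2 s2_gt0)).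
  have -> : s2 ^+ 2 * (8 * q ^+ 2) = 8 * p by rewrite -p_q2; ring.
  lra.
have p_le : p <= q ^+ 2.
  by rewrite -p_q2 ler_piMr ?sqr_ge0 // expr_le1 // ltW.
have g_le : g <= 8 * q ^+ 2.
  have [g_ge0|] := lerP 0 g; last by move=> g_lt0; nra.
  have : 1 / 2 * g <= c2 ^+ 2 * g by rewrite ler_wpM2r.
  lra.
have B_le : B <= 25 * q.
  have [q_le1|q_gt1] := lerP q 1; last by lra.
  rewrite -(ler_pM2l q_gt0); have := hB q q_gt0; nra.
have [B_ge0|B_lt0] := lerP 0 B.
  have : c2 / 2 * B <= 1 / 2 * B by rewrite ler_wpM2r //; lra.
  move: (c2 / 2 * B) => cB; lra.
have : c2 / 2 * B <= 0 by rewrite mulr_ge0_le0 ?divr_ge0 // ltW.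
move: (c2 / 2 * B) => cB; lra.
Qed.

Section QuadraticForm.
Variable R : realType.
Local Open Scope complex_scope.
Local Notation C := R[i].
Local Notation Re := (@complex.Re R).

Lemma real_complexN (x : R) : (- x)%:C = - x%:C :> C. Proof. exact: rmorphN. Qed.
Lemma real_complexB (x y : R) : (x - y)%:C = x%:C - y%:C :> C. Proof. exact: rmorphB. Qed.
Lemma real_complexM (x y : R) : (x * y)%:C = x%:C * y%:C :> C. Proof. exact: rmorphM. Qed.
Lemma real_complexX (x : R) n : (x ^+ n)%:C = x%:C ^+ n :> C. Proof. exact: rmorphXn. Qed.
Lemma real_complex_nat n : (n%:R : R)%:C = n%:R :> C. Proof. exact: rmorph_nat. Qed.

Lemma ReD (x y : C) : Re (x + y) = Re x + Re y.
Proof. by case: x; case: y. Qed.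

Lemma ReM_real (a : R) (x : C) : Re (a%:C * x) = a * Re x.
Proof. by case: x => u v; rewrite /= mul0r subr0. Qed.

Lemma Re_sum (I : finType) (F : I -> C) : Re (\sum_i F i) = \sum_i Re (F i).
Proof. exact: (big_morph _ ReD (erefl _)). Qed.

Lemma adjmxD m n (A B : 'M[C]_(m, n)) : adjmx (A + B) = adjmx A + adjmx B.
Proof. by apply/matrixP => i j; rewrite !mxE rmorphD. Qed.

Lemma adjmxZ m n a (A : 'M[C]_(m, n)) : adjmx (a *: A) = conjc a *: adjmx A.
Proof. by apply/matrixP => i j; rewrite !mxE rmorphM. Qed.

Lemma adjmxM m n p (A : 'M[C]_(m, n)) (B : 'M[C]_(n, p)) :
  adjmx (A *m B) = adjmx B *m adjmx A.
Proof. by rewrite /adjmx map_mxM trmx_mul. Qed.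

Variable n : nat.
Implicit Types (M N : 'M[C]_n) (x y : 'cV[C]_n).

Definition sform M x y : C := \tr (adjmx x *m M *m y).
Definition qform M x : R := Re (sform M x x).
Definition qcross M x y : R := Re (sform M x y + sform M y x).

Lemma sformDl M x y z : sform M (x + y) z = sform M x z + sform M y z.
Proof. by rewrite /sform adjmxD !mulmxDl mxtraceD. Qed.

Lemma sformDr M x y z : sform M x (y + z) = sform M x y + sform M x z.
Proof. by rewrite /sform !mulmxDr mxtraceD. Qed.

Lemma sformZl M a x z : sform M (a *: x) z = conjc a * sform M x z.
Proof. by rewrite /sform adjmxZ -!scalemxAl mxtraceZ. Qed.

Lemma sformZr M a x z : sform M z (a *: x) = a * sform M z x.
Proof. by rewrite /sform -!scalemxAr mxtraceZ. Qed.

Lemma Re_expect M x : Re (expect M x) = qform M x.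
Proof. by []. Qed.

Lemma sformE M x y :
  sform M x y = \sum_i \sum_k conjc (x i 0) * M i k * y k 0.
Proof.
rewrite /sform /mxtrace big_ord1 mxE.
under eq_bigr => k _ do rewrite mxE big_distrl /=.
rewrite exchange_big /=; apply: eq_bigr => i _; apply: eq_bigr => k _.
by rewrite !mxE.
Qed.

Lemma sform_unitary U x : unitary U -> sform 1%:M (U *m x) (U *m x) = sform 1%:M x x.
Proof.
move=> U_unitary; rewrite /sform adjmxM !mulmx1 mulmxA -(mulmxA (adjmx x)).
by rewrite U_unitary mulmx1.
Qed.

Lemma sform0l M y : sform M 0 y = 0.
Proof. by rewrite /sform /adjmx map_mx0 trmx0 !mul0mx mxtrace0. Qed.

Lemma sform0r M x : sform M x 0 = 0.
Proof. by rewrite /sform mulmx0 mxtrace0. Qed.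

Lemma sform_suml I (r : seq I) (P : pred I) (F : I -> 'cV[C]_n) M y :
  sform M (\sum_(i <- r | P i) F i) y = \sum_(i <- r | P i) sform M (F i) y.
Proof. exact: (big_morph (sform M ^~ y) (fun x1 x2 => sformDl M x1 x2 y) (sform0l M y)). Qed.

Lemma sform_sumr I (r : seq I) (P : pred I) (F : I -> 'cV[C]_n) M x :
  sform M x (\sum_(i <- r | P i) F i) = \sum_(i <- r | P i) sform M x (F i).
Proof. exact: (big_morph (sform M x) (sformDr M x) (sform0r M x)). Qed.

Lemma sform1E x : sform 1%:M x x = \sum_i conjc (x i 0) * x i 0.
Proof.
rewrite /sform mulmx1 /mxtrace big_ord1 mxE.
by apply: eq_bigr => i _; rewrite !mxE.
Qed.

Lemma psd1 : psd (1%:M : 'M[C]_n).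
Proof.
move=> x; rewrite [expect _ _]sform1E.
by apply: sumr_ge0 => i _; rewrite mulrC mulcJ_ge0.
Qed.

Lemma qform_ge0 M x : psd M -> 0 <= qform M x.
Proof. by move=> /(_ x); rewrite lecE => /andP[_]. Qed.

Lemma qform1_ge0 x : 0 <= qform 1%:M x.
Proof. exact: qform_ge0 psd1. Qed.

Lemma qformBl M N x : qform (M - N) x = qform M x - qform N x.
Proof.
rewrite /qform /sform mulmxBr mulmxBl linearB /=.
by move: (\tr _) (\tr _) => [? ?] [? ?] /=.
Qed.

Lemma qformZ M (a : R) x : qform M (a%:C *: x) = a ^+ 2 * qform M x.
Proof.
rewrite /qform sformZl sformZr conjc_real.
by move: (sform M x x) => ?; rewrite !ReM_real mulrA.
Qed.

Lemma qform_lin2 M (a b : R) x y :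
  qform M (a%:C *: x + b%:C *: y) =
  a ^+ 2 * qform M x + b ^+ 2 * qform M y + a * b * qcross M x y.
Proof.
rewrite /qform /qcross sformDl !sformDr !sformZl !sformZr !conjc_real.
(* Atoms are abstracted before [ring]/[lra] throughout: these tactics compare atoms up
   to conversion, which unfolds the matrix expressions and is very slow. *)
move: (sform M x x) (sform M x y) (sform M y x) (sform M y y) => ? ? ? ?.
rewrite !ReD !ReM_real; ring.
Qed.

Lemma qform_addNrot M (c s : R) x y :
  qform M (c%:C *: x + s%:C *: y) + qform M ((- s)%:C *: x + c%:C *: y) =
  (c ^+ 2 + s ^+ 2) * (qform M x + qform M y).
Proof. by rewrite !qform_lin2; move: (qform M x) (qform M y) (qcross M x y) => ? ? ?; ring. Qed.

Lemma qform_rotE M (c s : R) x y : c ^+ 2 + s ^+ 2 = 1 ->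
  qform M (c%:C *: x + s%:C *: y) = qform M x + qform M y - qform M ((- s)%:C *: x + c%:C *: y).
Proof. by move=> cs1; rewrite -[qform M x + _]mul1r -cs1 -qform_addNrot addrK. Qed.

Lemma qform_pm_r M (c s : R) x y :
  qform M (c%:C *: x + (- s)%:C *: y) + qform M (c%:C *: x + s%:C *: y) =
  2 * (c ^+ 2 * qform M x + s ^+ 2 * qform M y).
Proof. by rewrite !qform_lin2; move: (qform M x) (qform M y) (qcross M x y) => ? ? ?; ring. Qed.

Lemma qform_pm_l M (c s : R) x y :
  qform M (c%:C *: x + s%:C *: y) + qform M ((- c)%:C *: x + s%:C *: y) =
  2 * (c ^+ 2 * qform M x + s ^+ 2 * qform M y).
Proof. by rewrite !qform_lin2; move: (qform M x) (qform M y) (qcross M x y) => ? ? ?; ring. Qed.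

Lemma qform_le_id M x : psd (1%:M - M) -> qform M x <= qform 1%:M x.
Proof. by move=> /(qform_ge0 x); rewrite qformBl subr_ge0. Qed.

Lemma qformD_le M x y : psd M -> qform M (x + y) <= 2 * qform M x + 2 * qform M y.
Proof.
move=> psdM; have := qform_ge0 (1%:C *: x + (-1)%:C *: y) psdM.
have -> : x + y = 1%:C *: x + 1%:C *: y by rewrite rmorph1 !scale1r.
rewrite !qform_lin2 sqrrN !expr1n !mul1r.
move: (qform M x) (qform M y) (qcross M x y) => ? ? ?; lra.
Qed.

Lemma qformB_le M x y : psd M -> qform M (x - y) <= 2 * qform M x + 2 * qform M y.
Proof.
move=> psdM; rewrite -scaleN1r -[-1](rmorphN1 (real_complex R)).
by apply: le_trans (qformD_le _ _ psdM) _; rewrite qformZ sqrrN expr1n mul1r.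
Qed.

Lemma qform_scaleB_le M (u v w : R) x y z : psd M -> u%:C *: x - v%:C *: y = w%:C *: z ->
  w ^+ 2 * qform M z <= 2 * (u ^+ 2 * qform M x) + 2 * (v ^+ 2 * qform M y).
Proof. by move=> psdM e; rewrite -!qformZ -e; exact: qformB_le. Qed.

Lemma qform_shift_le M x y (t : R) : psd M -> 0 < t ->
  t * (qform M (x + y) - qform M x) <= t ^+ 2 * qform M x + (1 + t) * qform M y.
Proof.
move=> psdM t_gt0; have := qform_ge0 (t%:C *: x + (-1)%:C *: y) psdM.
have -> : x + y = 1%:C *: x + 1%:C *: y by rewrite rmorph1 !scale1r.
have := qform_ge0 y psdM.
rewrite !qform_lin2 sqrrN !expr1n !mul1r.
move: (qform M x) (qform M y) (qcross M x y) => ? ? ?; nra.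
Qed.

End QuadraticForm.

Arguments psd1 {R n}.

Section TensorSlice.
Variable R : realType.
Local Notation C := R[i].
Variables m d : nat.
Implicit Types w : 'cV[C]_(m * d).

Definition slice w (j : 'I_m) : 'cV[C]_d := \col_i w (mxtens_index (j, i)) 0.

Lemma big_mxtens (F : 'I_(m * d) -> C) :
  \sum_k F k = \sum_j \sum_i F (mxtens_index (j, i)).
Proof.
rewrite pair_bigA /= (reindex (@mxtens_unindex m d)) /=; last first.
  by exists (@mxtens_index m d) => k _; [exact: mxtens_unindexK | exact: mxtens_indexK].
by apply: eq_bigr => k _; rewrite mxtens_unindexK.
Qed.

Lemma sform_tens (A : 'M[C]_m) (B : 'M[C]_d) w :
  sform (A *t B) w w = \sum_j \sum_l A j l * sform B (slice w j) (slice w l).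
Proof.
rewrite sformE big_mxtens; apply: eq_bigr => j _.
under eq_bigr => a _ do rewrite big_mxtens.
rewrite exchange_big /=; apply: eq_bigr => l _.
rewrite sformE mulr_sumr; apply: eq_bigr => a _.
rewrite mulr_sumr; apply: eq_bigr => b _.
by rewrite tensmxE !mxE; ring.
Qed.

Lemma sform1_slice w : sform 1%:M w w = \sum_j sform 1%:M (slice w j) (slice w j).
Proof.
rewrite sform1E big_mxtens; apply: eq_bigr => j _.
by rewrite sform1E; apply: eq_bigr => i _; rewrite !mxE.
Qed.

Lemma tensmxDl p q (x y : 'M[C]_(m, p)) (z : 'M[C]_(d, q)) :
  (x + y) *t z = x *t z + y *t z.
Proof. by apply/matrixP => i j; rewrite !mxE mulrDl. Qed.

Lemma tensmxZl p q a (x : 'M[C]_(m, p)) (z : 'M[C]_(d, q)) : (a *: x) *t z = a *: (x *t z).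
Proof. by apply/matrixP => i j; rewrite !mxE mulrA. Qed.

Lemma sliceD w1 w2 j : slice (w1 + w2) j = slice w1 j + slice w2 j.
Proof. by apply/matrixP => i k; rewrite !mxE. Qed.

Lemma sliceZ a w j : slice (a *: w) j = a *: slice w j.
Proof. by apply/matrixP => i k; rewrite !mxE. Qed.

Lemma slice_tens (x : 'cV[C]_m) (y : 'cV[C]_d) j : slice (x *t y) j = x j 0 *: y.
Proof.
apply/matrixP => i k; rewrite !mxE mxtens_indexK /= [k]ord1.
by congr (x j _ * y i _); exact: val_inj.
Qed.

Definition contract (v : 'cV[C]_m) w : 'cV[C]_d := \sum_j conjc (v j 0) *: slice w j.

Lemma qform_tens1l (E : 'M[C]_d) w : qform (1%:M *t E) w = \sum_j qform E (slice w j).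
Proof.
rewrite /qform sform_tens Re_sum; apply: eq_bigr => j _.
rewrite (bigD1 j) //= big1 => [|l /negPf neq_lj]; last by rewrite mxE eq_sym neq_lj mul0r.
by rewrite mxE eqxx mul1r addr0.
Qed.

Lemma sform_proj_tens (v : 'cV[C]_m) w :
  sform ((v *m adjmx v) *t 1%:M) w w = sform 1%:M (contract v w) (contract v w).
Proof.
rewrite sform_tens /contract sform_suml; apply: eq_bigr => j _.
rewrite sformZl conjcK sform_sumr mulr_sumr; apply: eq_bigr => l _.
by rewrite sformZr !mxE big_ord1 !mxE mulrA.
Qed.

End TensorSlice.

Section RejectionAlgebra.
Variables (K : comPzRingType) (n : nat) (a : 'I_2 -> 'I_2 -> 'cV[K]_n).

(* Alice's rejection amplitude when she sent c |0> + s |1>; see [accept_phi]. *)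
Definition rej (c s : K) : 'cV[K]_n :=
  (- s) *: (c *: a 0 0 + s *: a 0 1) + c *: (c *: a 1 0 + s *: a 1 1).

Lemma rej_sub c s : rej c (- s) - rej c s = (2 * c * s) *: (a 0 0 - a 1 1).
Proof.
apply/matrixP => i k; rewrite !mxE.
by move: (a 0 0 i k) (a 0 1 i k) (a 1 0 i k) (a 1 1 i k) => *; ring.
Qed.

Lemma rej_mix c s :
  c ^+ 2 *: (rej c (- s) + rej c s) - s ^+ 2 *: (rej s c + rej (- s) c) =
  (2 * (c ^+ 4 - s ^+ 4)) *: a 1 0.
Proof.
apply/matrixP => i k; rewrite !mxE.
by move: (a 0 0 i k) (a 0 1 i k) (a 1 0 i k) (a 1 1 i k) => *; ring.
Qed.

End RejectionAlgebra.

Section Amplitudes.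
Variables (R : realType) (d : nat) (a : 'I_2 -> 'I_2 -> 'cV[R[i]]_d).
Local Open Scope complex_scope.
Local Notation C := R[i].

Definition rej_sum (c s : R) : R :=
  qform 1%:M (rej a c%:C (- s%:C)) + qform 1%:M (rej a c%:C s%:C) +
  (qform 1%:M (rej a s%:C c%:C) + qform 1%:M (rej a (- s%:C) c%:C)).

Lemma rej_sum_ge0 (c s : R) : 0 <= rej_sum c s.
Proof. by rewrite /rej_sum !addr_ge0 ?qform1_ge0. Qed.

Lemma rej_diag_le (c s : R) : (2 * c * s) ^+ 2 * qform 1%:M (a 0 0 - a 1 1) <= 2 * rej_sum c s.
Proof.
rewrite -qformZ real_complexM real_complexM real_complex_nat -rej_sub.
apply: (le_trans (qformB_le _ _ psd1)).
by rewrite -mulrDr ler_wpM2l // lerDl addr_ge0 ?qform1_ge0.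
Qed.

Lemma rej_offdiag_le (c s : R) :
  c ^+ 2 + s ^+ 2 = 1 -> (c ^+ 2 - s ^+ 2) ^+ 2 * qform 1%:M (a 1 0) <= rej_sum c s.
Proof.
move=> cs1; have mix := rej_mix a c%:C s%:C.
rewrite -!real_complexX -[2 : C](real_complex_nat R 2) -real_complexB -real_complexM in mix.
apply: (offdiag_arith cs1 (qform1_ge0 _) (qform1_ge0 _) (qform1_ge0 _) (qform1_ge0 _)
  (qformD_le _ _ psd1) (qformD_le _ _ psd1)).
exact: qform_scaleB_le psd1 mix.
Qed.

Definition mix_expect (M : 'M[C]_d) (c s : R) : R :=
  c ^+ 2 * (qform M (a 0 0) + qform M (a 1 0)) + s ^+ 2 * (qform M (a 0 1) + qform M (a 1 1)).

Definition bias (M : 'M[C]_d) : R :=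
  qform M (a 0 0) + qform M (a 1 0) - qform M (a 0 1) - qform M (a 1 1).

Lemma sum_qform_pm_r M (c s : R) :
  \sum_j (qform M (c%:C *: a j 0 + (- s)%:C *: a j 1) + qform M (c%:C *: a j 0 + s%:C *: a j 1)) =
  2 * mix_expect M c s.
Proof.
rewrite big_ord2 !qform_pm_r /mix_expect.
by move: (qform M (a 0 0)) (qform M (a 1 0)) (qform M (a 0 1)) (qform M (a 1 1)) => *; ring.
Qed.

Lemma sum_qform_pm_l M (c s : R) :
  \sum_j (qform M (c%:C *: a j 0 + s%:C *: a j 1) + qform M ((- c)%:C *: a j 0 + s%:C *: a j 1)) =
  2 * mix_expect M c s.
Proof.
rewrite big_ord2 !qform_pm_l /mix_expect.
by move: (qform M (a 0 0)) (qform M (a 1 0)) (qform M (a 0 1)) (qform M (a 1 1)) => *; ring.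
Qed.

Hypothesis a_norm : forall k, qform 1%:M (a 0 k) + qform 1%:M (a 1 k) = 1.

Lemma mix_expect_bias M (c s : R) : c ^+ 2 + s ^+ 2 = 1 ->
  mix_expect M c s + mix_expect (1%:M - M) s c = 1 + (c ^+ 2 - s ^+ 2) * bias M.
Proof.
move=> cs1; have := a_norm 0; have := a_norm 1.
rewrite /mix_expect /bias !qformBl.
move: (qform M (a 0 0)) (qform M (a 1 0)) (qform M (a 0 1)) (qform M (a 1 1)) => f00 f10 f01 f11.
move: (qform 1%:M (a 0 0)) (qform 1%:M (a 1 0)) (qform 1%:M (a 0 1)) (qform 1%:M (a 1 1)).
move=> g00 g10 g01 g11 n1 n0.
have -> : g10 = 1 - g00 by rewrite -n0 addrAC subrr add0r.
have -> : g11 = 1 - g01 by rewrite -n1 addrAC subrr add0r.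
have -> : s ^+ 2 = 1 - c ^+ 2 by rewrite -cs1 addrAC subrr add0r.
ring.
Qed.

Lemma bias_le1 M : psd M -> psd (1%:M - M) -> bias M <= 1.
Proof.
move=> psdM psd1M; have := a_norm 0; rewrite /bias.
have := qform_le_id (a 0 0) psd1M; have := qform_le_id (a 1 0) psd1M.
have := qform_ge0 (a 0 1) psdM; have := qform_ge0 (a 1 1) psdM.
move: (qform M (a 0 0)) (qform M (a 1 0)) (qform M (a 0 1)) (qform M (a 1 1)).
by move: (qform 1%:M (a 0 0)) (qform 1%:M (a 1 0)) => *; lra.
Qed.

Lemma bias_shift_le M (t : R) : psd M -> psd (1%:M - M) -> 0 < t ->
  t * bias M <= t ^+ 2 + (1 + t) * qform 1%:M (a 0 0 - a 1 1) + t * qform 1%:M (a 1 0).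
Proof.
move=> psdM psd1M t_gt0.
have := qform_shift_le (a 1 1) (a 0 0 - a 1 1) psdM t_gt0; rewrite [a 1 1 + _]addrC subrK.
have := qform_le_id (a 0 0 - a 1 1) psd1M; have := qform_le_id (a 1 0) psd1M.
have := qform_le_id (a 1 1) psd1M; have := qform_ge0 (a 0 1) psdM.
have := a_norm 1; have := qform1_ge0 (a 0 1); rewrite /bias.
move: (qform M (a 0 0)) (qform M (a 1 0)) (qform M (a 0 1)) (qform M (a 1 1)).
move: (qform 1%:M (a 0 1)) (qform 1%:M (a 1 1)) (qform 1%:M (a 1 0)).
move: (qform M (a 0 0 - a 1 1)) (qform 1%:M (a 0 0 - a 1 1)) => *.
nra.
Qed.

End Amplitudes.

Section Trigonometry.
Variable R : realType.

Lemma cos_pihalfB (x : R) : cos (pi / 2 - x) = sin x.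
Proof. by rewrite cosB cos_pihalf sin_pihalf mul0r add0r mul1r. Qed.

Lemma sin_pihalfB (x : R) : sin (pi / 2 - x) = cos x.
Proof. by rewrite sinB cos_pihalf sin_pihalf mul0r subr0 mul1r. Qed.

Lemma cos_pihalfD (x : R) : cos (pi / 2 + x) = - sin x.
Proof. by rewrite cosD cos_pihalf sin_pihalf mul0r sub0r mul1r. Qed.

Lemma sin_pihalfD (x : R) : sin (pi / 2 + x) = cos x.
Proof. by rewrite sinD cos_pihalf sin_pihalf mul0r addr0 mul1r. Qed.

Lemma cos_double (x : R) : cos (2 * x) = cos x ^+ 2 - sin x ^+ 2.
Proof. by rewrite mulr_natl cos_mulr2n sin2cos2 mulr2n; ring. Qed.

Lemma sin_double (x : R) : sin (2 * x) = 2 * cos x * sin x.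
Proof. by rewrite mulr_natl sin_mulr2n -mulr_natl mulrA. Qed.

Lemma double_angle_bounds (th : R) : 0 < th -> th <= pi / 8 ->
  [/\ 0 < sin (2 * th), sin (2 * th) <= 1, 0 <= cos (2 * th), cos (2 * th) <= 1 &
       1 / 2 <= cos (2 * th) ^+ 2].
Proof.
move=> th_gt0 th_le; have pi_gt0 := pi_gt0 R.
split; [|exact: sin_le1| |exact: cos_le1|].
- by apply: sin_gt0_pi; apply/andP; split; lra.
- by apply: cos_ge0_pihalf; apply/andP; split; lra.
have : 0 <= cos ((2 * th) *+ 2).
  by apply: cos_ge0_pihalf; rewrite -mulr_natl; apply/andP; split; lra.
by rewrite cos_mulr2n mulr2n; move: (cos (2 * th) ^+ 2) => x; lra.
Qed.

End Trigonometry.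

Section ReturnChallenge.
Variable R : realType.
Local Open Scope complex_scope.
Local Notation C := R[i].
Local Notation Re := (@complex.Re R).

Lemma Re_mul_quarter (z : C) : Re (1 / 4 * z) = 1 / 4 * Re z.
Proof.
have -> : (1 / 4 : C) = (1 / 4 : R)%:C by rewrite rmorphM rmorph1 fmorphV rmorph_nat.
exact: ReM_real.
Qed.

Lemma phi_basis (a : R) :
  phi a = (cos a)%:C *: delta_mx 0 0 + (sin a)%:C *: delta_mx 1 0 :> 'cV[C]_2.
Proof.
apply/matrixP => i k; rewrite [k]ord1 !mxE.
by case: i => [[|[|i]] hi] //=; rewrite ?mulr1 ?mulr0 ?addr0 ?add0r.
Qed.

Lemma qform1_phi (a : R) : qform 1%:M (phi a : 'cV[C]_2) = 1.
Proof.
rewrite /qform sform1E big_ord2 !mxE !conjc_real -!rmorphM -rmorphD /=.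
by rewrite -!expr2 cos2Dsin2.
Qed.

Lemma contract_phi d (a : R) (w : 'cV[C]_(2 * d)) :
  contract (phi a) w = (cos a)%:C *: slice w 0 + (sin a)%:C *: slice w 1.
Proof. by rewrite /contract big_ord2 !mxE !conjc_real. Qed.

Definition angle (th : R) (b x : bool) : R :=
  match b, x with
  | false, false => - th
  | false, true => th
  | true, false => pi / 2 - th
  | true, true => pi / 2 + th
  end.

Lemma phibxE th b x : phibx th b x = phi (angle th b x).
Proof. by case: b; case: x. Qed.

Lemma sum_quarter_compl (F : bool -> bool -> R) :
  1 - \sum_b \sum_x 1 / 4 * (1 - F b x) = 1 / 4 * \sum_b \sum_x F b x.
Proof. rewrite !big_bool2; lra. Qed.

Variables (th : R) (d : nat) (psi0 : 'cV[C]_d) (U : 'M[C]_(2 * d)).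
Hypotheses (psi0_unit : expect 1%:M psi0 = 1) (U_unitary : unitary U).

(* [amp j k] is the component along |j> of Bob's output U (|k> (x) psi0). *)
Definition amp (j k : 'I_2) : 'cV[C]_d := slice (U *m ((delta_mx k 0 : 'cV[C]_2) *t psi0)) j.

Lemma qform1_out (v : 'cV[C]_2) :
  qform 1%:M (slice (U *m (v *t psi0)) 0) + qform 1%:M (slice (U *m (v *t psi0)) 1) =
  qform 1%:M v.
Proof.
set w := U *m (v *t psi0).
rewrite /qform -ReD -(big_ord2 (fun j => sform 1%:M (slice w j) (slice w j))).
rewrite -sform1_slice sform_unitary //.
rewrite sform1_slice sform1E; congr Re; apply: eq_bigr => j _.
by rewrite slice_tens sformZl sformZr -[sform _ _ _]/(expect 1%:M psi0) psi0_unit mulr1.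
Qed.

Lemma amp_norm k : qform 1%:M (amp 0 k) + qform 1%:M (amp 1 k) = 1.
Proof.
rewrite qform1_out /qform sform1E big_ord2 !mxE.
by rewrite !conjc_nat -!natrM -natrD; case: k => [[|[|k]] hk].
Qed.

Lemma slice_out_phi (a : R) j :
  slice (U *m (phi a *t psi0)) j = (cos a)%:C *: amp j 0 + (sin a)%:C *: amp j 1.
Proof. by rewrite phi_basis tensmxDl !tensmxZl mulmxDr -!scalemxAr sliceD !sliceZ. Qed.

Lemma slice_joint_state b x j :
  slice (joint_state th psi0 U b x) j =
  (cos (angle th b x))%:C *: amp j 0 + (sin (angle th b x))%:C *: amp j 1.
Proof. by rewrite /joint_state phibxE slice_out_phi. Qed.

Lemma accept_phi (a : R) :
  qform ((phi a *m adjmx (phi a)) *t 1%:M) (U *m (phi a *t psi0)) =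
  1 - qform 1%:M (rej amp (cos a)%:C (sin a)%:C).
Proof.
have norm1 := qform1_out (phi a); rewrite qform1_phi !slice_out_phi in norm1.
rewrite {1}/qform sform_proj_tens -/(qform _ _) contract_phi !slice_out_phi.
have := cos2Dsin2 a; move: (cos a) (sin a) norm1 => c s norm1 cs1; rewrite /rej.
move: (c%:C *: amp 0 0 + _) (c%:C *: amp 1 0 + _) norm1 => x0 x1 norm1.
by rewrite -real_complexN qform_rotE // norm1.
Qed.

Lemma prob_errE : prob_err th psi0 U = 1 / 4 * rej_sum amp (cos th) (sin th).
Proof.
rewrite /prob_err Re_sum.
under eq_bigr => b _ do rewrite Re_sum.
under eq_bigr => b _ do under eq_bigr => x _ do
  rewrite Re_mul_quarter Re_expect /joint_state phibxE accept_phi.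
rewrite sum_quarter_compl big_bool2 /angle.
by rewrite cosN sinN cos_pihalfB sin_pihalfB cos_pihalfD sin_pihalfD !real_complexN.
Qed.

Lemma prob_err_ge0 : 0 <= prob_err th psi0 U.
Proof. by rewrite prob_errE mulr_ge0 ?rej_sum_ge0 ?divr_ge0. Qed.

Lemma prob_err_diag :
  sin (2 * th) ^+ 2 * qform 1%:M (amp 0 0 - amp 1 1) <= 8 * prob_err th psi0 U.
Proof.
rewrite prob_errE sin_double; apply: (le_trans (rej_diag_le _ _ _)).
by move: (rej_sum _ _ _) => r; lra.
Qed.

Lemma prob_err_offdiag : cos (2 * th) ^+ 2 * qform 1%:M (amp 1 0) <= 4 * prob_err th psi0 U.
Proof.
rewrite prob_errE cos_double; apply: (le_trans (rej_offdiag_le _ (cos2Dsin2 th))).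
by move: (rej_sum _ _ _) => r; lra.
Qed.

Lemma guess_sumE (M : 'M[C]_d) b :
  \sum_x Re (1 / 4 * expect (1%:M *t M) (joint_state th psi0 U b x)) =
  1 / 2 * (if b then mix_expect amp M (sin th) (cos th) else mix_expect amp M (cos th) (sin th)).
Proof.
under eq_bigr => x _ do rewrite Re_mul_quarter Re_expect qform_tens1l.
under eq_bigr => x _ do under eq_bigr => j _ do rewrite slice_joint_state.
rewrite sum_bool -mulrDr -big_split.
case: b; rewrite /angle.
- rewrite cos_pihalfB sin_pihalfB cos_pihalfD sin_pihalfD sum_qform_pm_l.
  by move: (mix_expect _ _ _ _) => w; field.
- rewrite cosN sinN sum_qform_pm_r.
  by move: (mix_expect _ _ _ _) => w; field.
Qed.

Lemma prob_guessE E : povm E ->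
  prob_guess th psi0 U E = 1 / 2 + cos (2 * th) / 2 * bias amp (E false).
Proof.
move=> [_ [_ sumE]]; have E1 : E true = 1%:M - E false by rewrite -sumE [E false + _]addrC addrK.
rewrite /prob_guess Re_sum; under eq_bigr => b _ do rewrite Re_sum guess_sumE.
rewrite cos_double sum_bool /= E1 -mulrDr (mix_expect_bias amp_norm) ?cos2Dsin2 //.
by move: (bias _ _) (cos th ^+ 2 - sin th ^+ 2) => B c2; field.
Qed.

End ReturnChallenge.

Theorem theorem10 (R : realType) :
  exists Cst : R, forall th p : R,
    0 < th -> th <= pi / 8 -> 0 <= p -> p <= 1 ->
    sealing th (Cst * Num.sqrt p / sin (2 * th)) p.
Proof.
exists 13 => th p th_gt0 th_le _ _ d psi0 U E psi0_unit U_unitary povmE.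
have [|err_lt_p] := lerP p (prob_err th psi0 U); [by right | left].
have [E0_psd [E1_psd sumE]] := povmE.
have IE0_psd : psd (1%:M - E false) by rewrite -sumE addrAC subrr add0r.
have [s2_gt0 s2_le1 c2_ge0 c2_le1 c2_sqr] := double_angle_bounds th_gt0 th_le.
have amp_norm1 := amp_norm psi0_unit U_unitary.
rewrite (prob_guessE th psi0_unit U_unitary povmE) lerD2l.
apply: (sealing_arith s2_gt0 s2_le1 c2_ge0 c2_le1 c2_sqr (prob_err_ge0 th psi0_unit U_unitary)
  err_lt_p (prob_err_diag th psi0_unit U_unitary) (prob_err_offdiag th psi0_unit U_unitary)
  (bias_le1 amp_norm1 E0_psd IE0_psd)).
by move=> t t_gt0; exact: bias_shift_le amp_norm1 _ _ E0_psd IE0_psd t_gt0.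
Qed.
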